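(* Let $G$ be a countable group, and identify the power set $\mathbf{P}_G$ with $\{0,1\}^G$ (via characteristic functions) carrying the product topology. Then, as subsets of $\mathbf{P}_G$: the family $\mathbf{L}_G$ of large subsets is $F_\sigma$; the family $\mathbf{T}_G$ of thick subsets is $G_\delta$; the family $\mathbf{PT}_G$ of prethick subsets is $G_{\delta\sigma}$; and the families $\mathbf{S}_G$ of small subsets and $\mathbf{EL}_G$ of extralarge subsets are $F_{\sigma\delta}$.
   Context: Let $G$ be a group and $\mathcal{F}_G$ the family of finite subsets of $G$. A subset $A\subseteq G$ is large if $G=FA$ for some $F\in\mathcal{F}_G$; small if $L\setminus A$ is large for every large $L\subseteq G$; extralarge if $G\setminus A$ is small; thick if for every $F\in\mathcal{F}_G$ there is $a\in A$ with $Fa\subseteq A$; prethick if $FA$ is thick for some $F\in\mathcal{F}_G$. The topology on $\mathbf{P}_G$ has as subbase the sets $\{X: K\subseteq X\}$ and $\{X: X\cap K=\emptyset\}$ for finite $K\subseteq G$. *)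

From Stdlib Require Import List Classical.
Import ListNotations.

Record is_group (G : Type) (mul : G -> G -> G) (e : G) (inv : G -> G) : Prop := {
  grp_assoc : forall x y z, mul x (mul y z) = mul (mul x y) z;
  grp_idl : forall x, mul e x = x;
  grp_idr : forall x, mul x e = x;
  grp_invl : forall x, mul (inv x) x = e;
  grp_invr : forall x, mul x (inv x) = e }.

Arguments is_group {G} mul e inv.

Definition countable (G : Type) : Prop :=
  exists f : G -> nat, forall x y, f x = f y -> x = y.

Section Sizes.
Variables (G : Type) (mul : G -> G -> G).

(* finite subsets of G are represented by lists *)
Definition setmul (F : list G) (A : G -> Prop) : G -> Prop :=
  fun g => exists f a, In f F /\ A a /\ g = mul f a.

Definition large (A : G -> Prop) : Prop :=
  exists F : list G, forall g, setmul F A g.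

Definition small (A : G -> Prop) : Prop :=
  forall L : G -> Prop, large L -> large (fun g => L g /\ ~ A g).

Definition extralarge (A : G -> Prop) : Prop :=
  small (fun g => ~ A g).

Definition thick (A : G -> Prop) : Prop :=
  forall F : list G, exists a, A a /\ forall f, In f F -> A (mul f a).

Definition prethick (A : G -> Prop) : Prop :=
  exists F : list G, thick (setmul F A).
End Sizes.
Arguments large {G} mul A.
Arguments small {G} mul A.
Arguments extralarge {G} mul A.
Arguments thick {G} mul A.
Arguments prethick {G} mul A.
Arguments setmul {G} mul F A _.

(* P_G identified with {0,1}^G = G -> bool, product topology.
   Subbase/base: cylinders { X | K_in ⊆ X, X ∩ K_out = ∅ }, K_in, K_out finite. *)
Section Topology.
Variable G : Type.

Definition cylinder (Kin Kout : list G) : (G -> bool) -> Prop :=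
  fun X => (forall g, In g Kin -> X g = true) /\ (forall g, In g Kout -> X g = false).

Definition is_open (U : (G -> bool) -> Prop) : Prop :=
  forall X, U X -> exists Kin Kout, cylinder Kin Kout X /\
    forall Y, cylinder Kin Kout Y -> U Y.

Definition is_closed (C : (G -> bool) -> Prop) : Prop :=
  is_open (fun X => ~ C X).

Definition F_sigma (S : (G -> bool) -> Prop) : Prop :=
  exists C : nat -> (G -> bool) -> Prop,
    (forall n, is_closed (C n)) /\ forall X, S X <-> exists n, C n X.

Definition G_delta (S : (G -> bool) -> Prop) : Prop :=
  exists U : nat -> (G -> bool) -> Prop,
    (forall n, is_open (U n)) /\ forall X, S X <-> forall n, U n X.

Definition G_delta_sigma (S : (G -> bool) -> Prop) : Prop :=
  exists D : nat -> (G -> bool) -> Prop,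
    (forall n, G_delta (D n)) /\ forall X, S X <-> exists n, D n X.

Definition F_sigma_delta (S : (G -> bool) -> Prop) : Prop :=
  exists D : nat -> (G -> bool) -> Prop,
    (forall n, F_sigma (D n)) /\ forall X, S X <-> forall n, D n X.
End Topology.
Arguments F_sigma {G} S.
Arguments G_delta {G} S.
Arguments G_delta_sigma {G} S.
Arguments F_sigma_delta {G} S.
Arguments is_open {G} U.
Arguments is_closed {G} C.

Definition setof {G : Type} (X : G -> bool) : G -> Prop := fun g => X g = true.

(* Enumerating G as (g_n), the quantifiers over finite subsets of G in the
   definitions of large, thick and prethick may be restricted to the prefixes
   {g_0, ..., g_(k-1)}.  What remains are properties of X that are monotone and
   witnessed by finitely many points of X (or of its complement), and these
   define open subsets of {0,1}^G.  This gives the classes of L, T and PT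
   directly; S and EL follow because in a group a set is small iff it is not
   prethick, and A is extralarge iff G \ A is small. *)

From Stdlib Require Import List Classical ClassicalEpsilon Lia.
Import ListNotations.

Section Sizes.
Variables (G : Type) (mul : G -> G -> G).

Definition thick_at (M : list G) (A : G -> Prop) : Prop :=
  exists a, A a /\ forall f, In f M -> A (mul f a).

Definition monotone (P : (G -> Prop) -> Prop) : Prop :=
  forall A B : G -> Prop, (forall x, A x -> B x) -> P A -> P B.

Definition finitary (P : (G -> Prop) -> Prop) : Prop :=
  forall A, P A -> exists W, (forall w, In w W -> A w) /\ P (fun g => In g W).

Lemma setmul_mono (F F' : list G) (A B : G -> Prop) g :
  incl F F' -> (forall x, A x -> B x) -> setmul mul F A g -> setmul mul F' B g.
Proof. intros HF HA (f & a & Hf & Ha & ->). exists f, a; auto. Qed.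

Lemma large_mono (A B : G -> Prop) :
  (forall x, A x -> B x) -> large mul A -> large mul B.
Proof.
  intros HAB [F HF]. exists F. intro g.
  apply (setmul_mono F F A); auto using incl_refl.
Qed.

Lemma small_ext (A B : G -> Prop) :
  (forall g, A g <-> B g) -> small mul A -> small mul B.
Proof.
  intros HAB Hs L HL. apply (large_mono (fun g => L g /\ ~ A g)); [|auto].
  intros x [HLx HAx]. split; [exact HLx|]. rewrite <- HAB. exact HAx.
Qed.

Lemma thick_at_monotone M : monotone (thick_at M).
Proof. intros A B HAB (a & Ha & Hf). exists a; auto. Qed.

Lemma thick_at_finitary M : finitary (thick_at M).
Proof.
  intros A (a & Ha & Hf). exists (a :: map (fun f => mul f a) M). split.
  - intros w [<- | Hw]; [exact Ha|].
    apply in_map_iff in Hw as (f & <- & HfM). auto.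
  - exists a. split; [now left|]. intros f HfM. right. now apply (in_map (fun f => mul f a)).
Qed.

Lemma monotone_setmul K P : monotone P -> monotone (fun A => P (setmul mul K A)).
Proof.
  intros HP A B HAB. apply HP. intro g. apply setmul_mono; auto using incl_refl.
Qed.

Lemma list_choice {B} (R : G -> B -> Prop) (L : list G) :
  (forall x, In x L -> exists y, R x y) ->
  exists W, (forall x, In x L -> exists y, In y W /\ R x y) /\
            (forall y, In y W -> exists x, R x y).
Proof.
  induction L as [|x L IH]; intros H.
  - exists []. split; intros _ [].
  - destruct (H x (or_introl eq_refl)) as [y Hy].
    destruct IH as (W & HLW & HWL); [intros z Hz; apply H; now right|].
    exists (y :: W). split.
    + intros z [<- | Hz]; [exists y; split; [now left | exact Hy]|].
      destruct (HLW z Hz) as (y' & Hy' & HR). exists y'. split; [now right | exact HR].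
    + intros z [<- | Hz]; [now exists x | auto].
Qed.

(* Each of the finitely many witnesses k * a in setmul K A is traced back to
   its factor a in A. *)
Lemma finitary_setmul K P :
  monotone P -> finitary P -> finitary (fun A => P (setmul mul K A)).
Proof.
  intros Hm Hf A HPA. destruct (Hf _ HPA) as (W' & HW'K & HPW').
  destruct (list_choice (fun w a => A a /\ exists k, In k K /\ w = mul k a) W')
    as (W & HW'W & HWA).
  { intros w Hw. destruct (HW'K w Hw) as (k & a & Hk & Ha & ->). eauto. }
  exists W. split.
  - intros a Ha. destruct (HWA a Ha) as (w & HAa & _). exact HAa.
  - apply (Hm (fun g => In g W')); [|exact HPW'].
    intros w Hw. destruct (HW'W w Hw) as (a & HaW & _ & k & Hk & ->).
    exists k, a. auto.
Qed.

End Sizes.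

Arguments thick_at {G} mul M A.
Arguments monotone {G} P.
Arguments finitary {G} P.

Section Topology.
Variable G : Type.

Lemma open_of_finitary (P : (G -> Prop) -> Prop) (b : bool) :
  monotone P -> finitary P -> is_open (fun X => P (fun g => X g = b)).
Proof.
  intros Hm Hf X HX. destruct (Hf _ HX) as (W & HWX & HPW).
  assert (HW : forall Y, (forall w, In w W -> Y w = b) -> P (fun g => Y g = b)).
  { intros Y HY. exact (Hm _ _ HY HPW). }
  destruct b; [exists W, [] | exists [], W]; split.
  - split; [exact HWX | intros _ []].
  - intros Y [HY _]. auto.
  - split; [intros _ [] | exact HWX].
  - intros Y [_ HY]. auto.
Qed.

Lemma closed_of_compl_open (U C : (G -> bool) -> Prop) :
  is_open U -> (forall X, C X <-> ~ U X) -> is_closed C.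
Proof.
  intros HU HCU X HX. rewrite HCU in HX. apply NNPP in HX.
  destruct (HU X HX) as (Kin & Kout & HXK & HK).
  exists Kin, Kout. split; [exact HXK|].
  intros Y HYK. rewrite HCU. auto.
Qed.

Lemma F_sigma_compl (S : (G -> bool) -> Prop) :
  G_delta S -> F_sigma (fun X => ~ S X).
Proof.
  intros (U & HU & HSU). exists (fun m X => ~ U m X). split.
  - intro m. apply (closed_of_compl_open (U m)); [apply HU | tauto].
  - intro X. rewrite HSU. split; [apply not_all_ex_not | intros [m Hm] HX; auto].
Qed.

Lemma F_sigma_delta_compl (S T : (G -> bool) -> Prop) :
  G_delta_sigma S -> (forall X, T X <-> ~ S X) -> F_sigma_delta T.
Proof.
  intros (D & HD & HSD) HTS. exists (fun n X => ~ D n X). split.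
  - intro n. apply F_sigma_compl, HD.
  - intro X. rewrite HTS, HSD. split; [intros H n Hn; eauto | intros H [n Hn]; exact (H n Hn)].
Qed.

End Topology.

Section Groups.
Variables (G : Type) (mul : G -> G -> G) (e : G) (inv : G -> G).
Hypothesis HG : is_group mul e inv.

Lemma mulKg f a : mul (inv f) (mul f a) = a.
Proof. now rewrite (grp_assoc _ _ _ _ HG), (grp_invl _ _ _ _ HG), (grp_idl _ _ _ _ HG). Qed.

Lemma mulKVg f a : mul f (mul (inv f) a) = a.
Proof. now rewrite (grp_assoc _ _ _ _ HG), (grp_invr _ _ _ _ HG), (grp_idl _ _ _ _ HG). Qed.

Lemma setmul_iff K A g :
  setmul mul K A g <-> exists k, In k K /\ A (mul (inv k) g).
Proof.
  split.
  - intros (k & a & Hk & Ha & ->). exists k. now rewrite mulKg.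
  - intros (k & Hk & Ha). exists k, (mul (inv k) g). now rewrite mulKVg.
Qed.

Lemma thick_not_large_compl A : thick mul A -> ~ large mul (fun g => ~ A g).
Proof.
  intros HA [K HK]. destruct (HA (map inv K)) as (a & Ha & HKa).
  destruct (HK a) as (k & b & Hk & Hb & ->).
  apply Hb. rewrite <- (mulKg k b). apply HKa, in_map, Hk.
Qed.

(* Otherwise some F0 has every (e :: F0) g meeting B, so e :: F0^-1 covers G by
   translates of B. *)
Lemma thick_compl_not_large B : ~ large mul B -> thick mul (fun g => ~ B g).
Proof.
  intros Hnl. apply NNPP. intros Hnt. apply not_all_ex_not in Hnt as [F0 HF0].
  apply Hnl. exists (e :: map inv F0). intro g.
  destruct (classic (B g)) as [Hb | Hb].
  - exists e, g. rewrite (grp_idl _ _ _ _ HG). auto using in_eq.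
  - destruct (classic (exists f, In f F0 /\ B (mul f g))) as [(f & Hf & Hbf) | Hno].
    + exists (inv f), (mul f g). rewrite mulKg. auto using in_map, in_cons.
    + exfalso. apply HF0. exists g. split; [exact Hb|]. intros f Hf Hbf. eauto.
Qed.

Lemma small_iff_not_prethick A : small mul A <-> ~ prethick mul A.
Proof.
  split.
  - intros Hs [F HF].
    assert (HL : large mul (fun g => ~ setmul mul F A g \/ A g)).
    { exists (e :: F). intro g. destruct (classic (setmul mul F A g)) as [HFA | HFA].
      - destruct HFA as (f & a & Hf & Ha & ->). exists f, a. auto using in_cons.
      - exists e, g. rewrite (grp_idl _ _ _ _ HG). auto using in_eq. }
    apply (thick_not_large_compl _ HF).
    apply (large_mono _ _ (fun g => (~ setmul mul F A g \/ A g) /\ ~ A g)).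
    + intros g. tauto.
    + exact (Hs _ HL).
  - intros Hnpt L [K HK]. apply NNPP. intros Hnl.
    pose proof (thick_compl_not_large _ Hnl) as HT.
    apply Hnpt. exists K. intro H.
    set (J := flat_map (fun k => map (fun h => mul (inv k) h) (e :: H)) K).
    destruct (HT J) as (b & _ & HJb).
    (* h b = k l with l in L, and l = k^-1 h b lies outside L \ A, so l is in A *)
    assert (HKA : forall h, In h (e :: H) -> setmul mul K A (mul h b)).
    { intros h Hh. destruct (HK (mul h b)) as (k & l & Hk & Hl & Hhb).
      assert (El : l = mul (mul (inv k) h) b).
      { now rewrite <- (grp_assoc _ _ _ _ HG), Hhb, mulKg. }
      assert (HkhJ : In (mul (inv k) h) J).
      { apply in_flat_map. exists k. split; [exact Hk|]. now apply in_map. }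
      specialize (HJb _ HkhJ). rewrite <- El in HJb.
      exists k, l. split; [exact Hk|]. split; [|exact Hhb]. apply NNPP. tauto. }
    exists b. split.
    + specialize (HKA e (in_eq _ _)). now rewrite (grp_idl _ _ _ _ HG) in HKA.
    + intros h Hh. apply HKA. now right.
Qed.

(* The complement is witnessed by a point g with K^-1 g disjoint from X. *)
Lemma covering_closed K : is_closed (fun X => forall g, setmul mul K (setof X) g).
Proof.
  set (P := fun B : G -> Prop => exists g, forall k, In k K -> B (mul (inv k) g)).
  apply (closed_of_compl_open _ (fun X => P (fun g => X g = false))).
  - apply open_of_finitary.
    + intros B B' HBB' [g Hg]. exists g. auto.
    + intros B [g Hg]. exists (map (fun k => mul (inv k) g) K). split.
      * intros w Hw. apply in_map_iff in Hw as (k & <- & Hk). auto.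
      * exists g. intros k Hk. now apply (in_map (fun k => mul (inv k) g)).
  - intro X. split.
    + intros HX [g Hg]. destruct (proj1 (setmul_iff _ _ _) (HX g)) as (k & Hk & HXk).
      unfold setof in HXk. now rewrite Hg in HXk.
    + intros HnP g. apply setmul_iff. apply NNPP. intros Hno. apply HnP. exists g.
      intros k Hk. destruct (X (mul (inv k) g)) eqn:HXk; [|reflexivity].
      exfalso. apply Hno. now exists k.
Qed.

End Groups.

Lemma countable_enum (G : Type) (x0 : G) :
  countable G -> exists en : nat -> G, forall x, exists n, en n = x.
Proof.
  intros [c Hc]. exists (fun n => epsilon (inhabits x0) (fun x => c x = n)).
  intro x. exists (c x). apply Hc.
  apply (epsilon_spec (inhabits x0) (fun y => c y = c x)). now exists x.
Qed.

Definition enum_prefix {G : Type} (en : nat -> G) (k : nat) : list G :=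
  map en (seq 0 k).

Section Enumeration.
Variables (G : Type) (mul : G -> G -> G) (en : nat -> G).
Hypothesis Hen : forall x, exists n, en n = x.

Lemma prefix_cover (F : list G) : exists k, incl F (enum_prefix en k).
Proof.
  induction F as [|x F [k Hk]]; [exists 0; intros _ []|].
  destruct (Hen x) as [n <-]. exists (S (Nat.max k n)).
  intros y [<- | Hy]; apply in_map_iff.
  - exists n. split; [reflexivity|]. apply in_seq. lia.
  - apply Hk, in_map_iff in Hy as (m & <- & Hm). apply in_seq in Hm.
    exists m. split; [reflexivity|]. apply in_seq. lia.
Qed.

Lemma large_iff_prefix A :
  large mul A <-> exists k, forall g, setmul mul (enum_prefix en k) A g.
Proof.
  split; [|intros [k Hk]; now exists (enum_prefix en k)].
  intros [F HF]. destruct (prefix_cover F) as [k Hk]. exists k.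
  intro g. apply (setmul_mono _ _ F _ A); auto.
Qed.

Lemma thick_iff_prefix A :
  thick mul A <-> forall m, thick_at mul (enum_prefix en m) A.
Proof.
  split; [intros HA m; apply HA|].
  intros HA F. destruct (prefix_cover F) as [k Hk].
  destruct (HA k) as (a & Ha & HFa). exists a. auto.
Qed.

Lemma prethick_iff_prefix A :
  prethick mul A <-> exists k, thick mul (setmul mul (enum_prefix en k) A).
Proof.
  split; [|intros [k Hk]; now exists (enum_prefix en k)].
  intros [F HF]. destruct (prefix_cover F) as [k Hk]. exists k.
  intro M. apply (thick_at_monotone _ _ _ (setmul mul F A)); [|apply HF].
  intro g. apply setmul_mono; auto using incl_refl.
Qed.

End Enumeration.

Section Classification.
Variables (G : Type) (mul : G -> G -> G) (e : G) (inv : G -> G) (en : nat -> G).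
Hypotheses (HG : is_group mul e inv) (Hen : forall x, exists n, en n = x).

Lemma large_F_sigma : F_sigma (fun X : G -> bool => large mul (setof X)).
Proof.
  exists (fun k X => forall g, setmul mul (enum_prefix en k) (setof X) g). split.
  - intro k. exact (covering_closed _ _ _ _ HG _).
  - intro X. exact (large_iff_prefix _ _ _ Hen _).
Qed.

Lemma thick_G_delta : G_delta (fun X : G -> bool => thick mul (setof X)).
Proof.
  exists (fun m X => thick_at mul (enum_prefix en m) (setof X)). split.
  - intro m. apply open_of_finitary; [apply thick_at_monotone | apply thick_at_finitary].
  - intro X. exact (thick_iff_prefix _ _ _ Hen _).
Qed.

Lemma prethick_G_delta_sigma (b : bool) :
  G_delta_sigma (fun X : G -> bool => prethick mul (fun g => X g = b)).
Proof.
  exists (fun k X => thick mul (setmul mul (enum_prefix en k) (fun g => X g = b))). split.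
  - intro k. exists (fun m X => thick_at mul (enum_prefix en m)
                                  (setmul mul (enum_prefix en k) (fun g => X g = b))).
    split; [|intro X; exact (thick_iff_prefix _ _ _ Hen _)].
    intro m. apply (open_of_finitary G (fun A => thick_at mul _ (setmul mul _ A))).
    + apply monotone_setmul, thick_at_monotone.
    + apply finitary_setmul; [apply thick_at_monotone | apply thick_at_finitary].
  - intro X. exact (prethick_iff_prefix _ _ _ Hen _).
Qed.

Lemma small_F_sigma_delta (b : bool) :
  F_sigma_delta (fun X : G -> bool => small mul (fun g => X g = b)).
Proof.
  apply (F_sigma_delta_compl _ _ _ (prethick_G_delta_sigma b)).
  intro X. exact (small_iff_not_prethick _ _ _ _ HG _).
Qed.

Lemma extralarge_F_sigma_delta :
  F_sigma_delta (fun X : G -> bool => extralarge mul (setof X)).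
Proof.
  destruct (small_F_sigma_delta false) as (D & HD & HSD).
  exists D. split; [exact HD|]. intro X. rewrite <- HSD.
  assert (Hcompl : forall g, X g = false <-> ~ setof X g).
  { intro g. unfold setof. destruct (X g); split; congruence. }
  split; apply small_ext; firstorder.
Qed.

End Classification.

Theorem theorem3p1 (G : Type) (mul : G -> G -> G) (e : G) (inv : G -> G)
  (HG : is_group mul e inv) (Hc : countable G) :
  F_sigma (fun X : G -> bool => large mul (setof X)) /\
  G_delta (fun X : G -> bool => thick mul (setof X)) /\
  G_delta_sigma (fun X : G -> bool => prethick mul (setof X)) /\
  F_sigma_delta (fun X : G -> bool => small mul (setof X)) /\
  F_sigma_delta (fun X : G -> bool => extralarge mul (setof X)).
Proof.
  destruct (countable_enum G e Hc) as [en Hen].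
  repeat split.
  - exact (large_F_sigma _ _ _ _ _ HG Hen).
  - exact (thick_G_delta _ _ _ Hen).
  - exact (prethick_G_delta_sigma _ _ _ Hen true).
  - exact (small_F_sigma_delta _ _ _ _ _ HG Hen true).
  - exact (extralarge_F_sigma_delta _ _ _ _ _ HG Hen).
Qed.
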